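(* There is an absolute constant $c>0$ such that for every $k\ge 1$, every parity decision tree that computes $\mathsf{MAJ}_3^{\otimes k}$ has depth at least $c\cdot 2.25^k$; i.e., the parity decision tree depth of $\mathsf{MAJ}_3^{\otimes k}$ is $\Omega(2.25^k)$.
   Context: $\mathsf{MAJ}_3:\{-1,1\}^3\to\{-1,1\}$ is $\mathsf{MAJ}_3(x)=(-1)^{\mathbf{1}[x_1+x_2+x_3<0]}$. For $k\ge2$, $\mathsf{MAJ}_3^{\otimes k}:\{-1,1\}^{3^k}\to\{-1,1\}$ is defined by $\mathsf{MAJ}_3^{\otimes k}(x)=\mathsf{MAJ}_3\big(\mathsf{MAJ}_3^{\otimes k-1}(x_1,\dots,x_{3^{k-1}}),\mathsf{MAJ}_3^{\otimes k-1}(x_{3^{k-1}+1},\dots,x_{2\cdot3^{k-1}}),\mathsf{MAJ}_3^{\otimes k-1}(x_{2\cdot 3^{k-1}+1},\dots,x_{3^k})\big)$, with $\mathsf{MAJ}_3^{\otimes 1}=\mathsf{MAJ}_3$. A parity decision tree is a rooted full binary tree whose internal nodes are labelled by subsets $S$ of the variable indices, whose two outgoing edges are labelled $-1$ and $1$, and whose leaves are labelled by values in $\{-1,1\}$; an input $x$ follows from a node labelled $S$ the edge labelled $\prod_{i\in S}x_i$. It computes $f$ if every input $x$ reaches a leaf labelled $f(x)$; its depth is the maximum number of internal nodes on a root-to-leaf path. *)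

From mathcomp Require Import all_boot all_order all_algebra.
Set Implicit Arguments. Unset Strict Implicit. Unset Printing Implicit Defensive.

(* Encoding of {-1,1}: a boolean b stands for (-1)^b, i.e. true = -1, false = 1.
   Multiplication of signs becomes xor (addb). *)

(* MAJ_3 : value -1 iff x1+x2+x3 < 0 iff at least two of the inputs are -1. *)
Definition maj3 (a b c : bool) : bool := [|| a && b, a && c | b && c].

(* Recursive majority on a nat-indexed input; majk k x only reads x 0 .. x (3^k - 1).
   majk 0 x = x 0, so majk 1 x = maj3 (x 0) (x 1) (x 2) = MAJ_3. *)
Fixpoint majk (k : nat) (x : nat -> bool) : bool :=
  match k with
  | 0 => x 0%N
  | k'.+1 => maj3 (majk k' x)
                  (majk k' (fun i => x (i + 3 ^ k')%N))
                  (majk k' (fun i => x (i + 2 * 3 ^ k')%N))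
  end.

(* Extension of an input on 'I_n to nat (out-of-range indices are never read). *)
Definition ext (n : nat) (x : {ffun 'I_n -> bool}) : nat -> bool :=
  fun j => match insub j with Some i => x i | None => false end.

Definition MAJ3k (k : nat) (x : {ffun 'I_(3 ^ k) -> bool}) : bool :=
  majk k (ext x).

Inductive pdt (n : nat) : Type :=
| PLeaf : bool -> pdt n
| PNode : {set 'I_n} -> pdt n -> pdt n -> pdt n.
(* PNode S tm tp : tm is the child along edge -1, tp along edge 1. *)

Definition parity (n : nat) (S : {set 'I_n}) (x : {ffun 'I_n -> bool}) : bool :=
  \big[addb/false]_(i in S) x i.

Fixpoint pdt_eval (n : nat) (t : pdt n) (x : {ffun 'I_n -> bool}) : bool :=
  match t with
  | PLeaf b => b
  | PNode A tm tp => if parity A x then pdt_eval tm x else pdt_eval tp x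
  end.

Fixpoint pdt_depth (n : nat) (t : pdt n) : nat :=
  match t with
  | PLeaf _ => 0
  | PNode _ tm tp => (maxn (pdt_depth tm) (pdt_depth tp)).+1
  end.

Definition pdt_computes (n : nat) (t : pdt n) (f : {ffun 'I_n -> bool} -> bool) : Prop :=
  forall x, pdt_eval t x = f x.

(* Write functions on the cube as formal combinations of characters
   chi_S = prod_(i in S) x_i.  A parity query at S splits f as
   ((1 - chi_S) f_- + (1 + chi_S) f_+) / 2, so a parity decision tree of depth d
   is a combination of at most 4^d characters and, by orthogonality of
   characters, its Fourier spectrum has at most 4^d elements.  On the other
   hand MAJ_3(f, g, h) = (f + g + h - f g h) / 2; when f, g, h read disjoint
   blocks of variables and have no constant term, its spectrum contains the
   spectrum of f together with every union V0 :|: V1 :|: V2 of spectral sets of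
   f, g and h.  So the spectrum of MAJ_3^{k} has at least s_k elements, where
   s_(k+1) = s_k^3 + s_k >= 2^(3^k).  Hence a tree computing MAJ_3^{k} has
   depth d with 2^(3^(k-1)) <= 4^d, i.e. d >= 3^(k-1) / 2 >= (9/4)^k / 6. *)

From mathcomp Require Import all_boot all_order all_algebra.
From mathcomp Require Import ring zify.
Import Order.TTheory GRing.Theory Num.Theory.
Set Implicit Arguments. Unset Strict Implicit. Unset Printing Implicit Defensive.
Local Open Scope ring_scope.
Open Scope nat_scope.

Definition sign (b : bool) : rat := if b then (-1)%R else 1%R.

Lemma sign_addb a b : sign (a (+) b) = (sign a * sign b)%R.
Proof. by case: a; case: b; rewrite /sign /= ?mulN1r ?mulr1 ?mul1r ?opprK. Qed.

Definition seq_parity (s : seq nat) (y : nat -> bool) : bool :=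
  \big[addb/false]_(i <- s) y i.

Definition chi (s : seq nat) (y : nat -> bool) : rat := sign (seq_parity s y).

Lemma chi_cat s1 s2 y : chi (s1 ++ s2) y = (chi s1 y * chi s2 y)%R.
Proof. by rewrite /chi /seq_parity big_cat sign_addb. Qed.

Lemma seq_parity_count s y :
  seq_parity s y = \big[addb/false]_(j <- undup s) (odd (count_mem j s) && y j).
Proof.
rewrite /seq_parity -big_undup_iterop_count; apply: eq_bigr => j _.
case: (count_mem j s) => [|c] //=; elim: c => [|c IH] //=.
by rewrite IH; case: (odd c); case: (y j).
Qed.

(* A formal linear combination of characters; a character is named by a list
   of variables, possibly with repetitions. *)
Definition expansion := seq (seq nat * rat).

Definition eval_exp (E : expansion) (y : nat -> bool) : rat :=
  (\sum_(e <- E) e.2 * chi e.1 y)%R.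

Definition chi_exp (s : seq nat) : expansion := [:: (s, 1%R)].

Definition scale_exp (c : rat) (E : expansion) : expansion :=
  [seq (e.1, (c * e.2)%R) | e <- E].

Definition mul_exp (A B : expansion) : expansion :=
  [seq (a.1 ++ b.1, (a.2 * b.2)%R) | a <- A, b <- B].

Lemma eval_chi_exp s y : eval_exp (chi_exp s) y = chi s y.
Proof. by rewrite /eval_exp big_seq1 mul1r. Qed.

Lemma eval_exp_cat A B y : eval_exp (A ++ B) y = (eval_exp A y + eval_exp B y)%R.
Proof. by rewrite /eval_exp big_cat. Qed.

Lemma eval_scale_exp c A y : eval_exp (scale_exp c A) y = (c * eval_exp A y)%R.
Proof. by rewrite /eval_exp big_map mulr_sumr; apply: eq_bigr => e _; rewrite mulrA. Qed.

Lemma eval_mul_exp A B y : eval_exp (mul_exp A B) y = (eval_exp A y * eval_exp B y)%R.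
Proof.
rewrite /eval_exp big_allpairs_dep mulr_suml; apply: eq_bigr => a _.
by rewrite mulr_sumr; apply: eq_bigr => b _; rewrite chi_cat mulrACA.
Qed.

Section Cube.
Variable n : nat.
Implicit Types (x : {ffun 'I_n -> bool}) (U : {set 'I_n}).

Lemma ext_val x (i : 'I_n) : ext x (val i) = x i.
Proof. by rewrite /ext valK. Qed.

Lemma ext_ge x j : n <= j -> ext x j = false.
Proof. by move=> h; rewrite /ext insubF // ltnNge h. Qed.

Definition toggle (i : 'I_n) x : {ffun 'I_n -> bool} := [ffun j => (j == i) (+) x j].

Lemma toggleK i : involutive (toggle i).
Proof. by move=> x; apply/ffunP => j; rewrite !ffunE addbA addbb. Qed.

Lemma ext_toggle i x j : ext (toggle i x) j = ext x j (+) (j == val i).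
Proof.
rewrite /ext; case: insubP => [o _ <-|hj] /=; first by rewrite ffunE addbC val_eqE.
by case: eqP hj => [->|]; rewrite ?ltn_ord ?addbF.
Qed.

Lemma seq_parity_toggle s i x :
  seq_parity s (ext (toggle i x)) = seq_parity s (ext x) (+) odd (count_mem (val i) s).
Proof.
rewrite /seq_parity; elim: s => [|a s IH]; first by rewrite !big_nil.
by rewrite !big_cons IH ext_toggle /= oddD addbACA oddb.
Qed.

Definition odd_support (s : seq nat) : {set 'I_n} := [set i | odd (count_mem (val i) s)].

Lemma sum_chi s :
  (\sum_(x : {ffun 'I_n -> bool}) chi s (ext x))%R =
  if odd_support s == set0 then (2 ^ n)%:R%R else 0%R.
Proof.
case: ifP => [/eqP even_s | /negbT /set0Pn [i odd_i]].
  under eq_bigr => x _.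
    rewrite /chi seq_parity_count big1 => [|j _]; last first.
      case: (ltnP j n) => [jn|]; last by move/ext_ge ->; rewrite andbF.
      by have /setP/(_ (Ordinal jn)) := even_s; rewrite !inE /= => ->.
  over.
  by rewrite sumr_const card_ffun card_bool card_ord.
(* toggling variable [i] is a bijection of the cube that negates [chi s] *)
set S := (\sum_x _)%R; have S_opp : S = (- S)%R.
  rewrite [LHS](reindex_inj (can_inj (toggleK i))) -sumrN; apply: eq_bigr => x _.
  by rewrite /chi seq_parity_toggle; rewrite inE in odd_i; rewrite odd_i sign_addb mulrN1.
have : (S *+ 2 = 0)%R by rewrite mulr2n {1}S_opp addNr.
by move/eqP; rewrite mulrn_eq0 => /eqP.
Qed.

(* As chi_i^2 = 1, a character only depends on the variables occurring an odd
   number of times in its list; [coef E U] is the Fourier coefficient of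
   [eval_exp E] at [U] (see [coef_eq_of_eval]). *)
Definition coef (E : expansion) U : rat :=
  (\sum_(e <- E) e.2 * (odd_support e.1 == U)%:R)%R.

Definition setseq U : seq nat := map val (enum U).

Definition spectrum (E : expansion) : {set {set 'I_n}} := [set U | coef E U != 0%R].

Lemma count_setseq U i : count_mem (val i) (setseq U) = (i \in U).
Proof.
rewrite /setseq count_map (eq_count (a2 := pred1 i)) => [|j]; last by rewrite /= val_eqE.
by rewrite count_uniq_mem ?enum_uniq // mem_enum.
Qed.

Lemma odd_support_cat_setseq s U :
  (odd_support (s ++ setseq U) == set0) = (odd_support s == U).
Proof.
apply/eqP/eqP => [/setP E | <-]; apply/setP => i.
  have := E i; rewrite !inE count_cat count_setseq oddD.
  by case: (odd _); case: (i \in U).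
by rewrite !inE count_cat count_setseq oddD !inE oddb addbb.
Qed.

Lemma parity_seq_parity (A : {set 'I_n}) x : parity A x = seq_parity (setseq A) (ext x).
Proof.
rewrite /parity /seq_parity big_map big_enum; apply: eq_bigr => i _.
by rewrite ext_val.
Qed.

Lemma sum_eval_exp_chi E U :
  (\sum_(x : {ffun 'I_n -> bool}) eval_exp E (ext x) * chi (setseq U) (ext x))%R =
  ((2 ^ n)%:R * coef E U)%R.
Proof.
rewrite /eval_exp /coef; under eq_bigr do rewrite mulr_suml.
rewrite exchange_big mulr_sumr; apply: eq_bigr => e _.
under eq_bigr do rewrite -mulrA -chi_cat.
rewrite -mulr_sumr sum_chi odd_support_cat_setseq.
by case: (_ == U); rewrite ?mulr1 ?mulr0 ?mul0r // mulrC.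
Qed.

Lemma coef_eq_of_eval E1 E2 :
  (forall x, eval_exp E1 (ext x) = eval_exp E2 (ext x)) -> coef E1 =1 coef E2.
Proof.
move=> E U; apply: (@mulfI _ (2 ^ n)%:R); first by rewrite pnatr_eq0 expn_eq0.
by rewrite -!sum_eval_exp_chi; apply: eq_bigr => x _; rewrite E.
Qed.

Lemma card_spectrum E : #|spectrum E| <= size E.
Proof.
rewrite -(size_map (fun e => odd_support e.1)); apply: leq_trans (card_size _).
apply/subset_leq_card/subsetP => U; rewrite !inE; apply: contraR => U_notin.
rewrite /coef big1_seq // => e /andP [_ he]; case: eqP => [eU|]; last by rewrite mulr0.
by case/mapP: U_notin; exists e.
Qed.

End Cube.

(* f = ((1 - chi_A) f_- + (1 + chi_A) f_+) / 2 at a node querying A *)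
Fixpoint pdt_expansion n (t : pdt n) : expansion :=
  match t with
  | PLeaf b => [:: ([::], sign b)]
  | PNode A tm tp =>
      let chiA := chi_exp (setseq A) in
      let Em := pdt_expansion tm in let Ep := pdt_expansion tp in
      scale_exp (1/2) (Em ++ Ep ++ scale_exp (-1) (mul_exp chiA Em) ++ mul_exp chiA Ep)
  end.

Lemma eval_pdt_expansion n (t : pdt n) x :
  eval_exp (pdt_expansion t) (ext x) = sign (pdt_eval t x).
Proof.
elim: t => [b|A tm IHm tp IHp].
  by rewrite /eval_exp big_seq1 /chi /seq_parity big_nil mulr1.
simpl pdt_expansion.
rewrite eval_scale_exp 3!eval_exp_cat eval_scale_exp !eval_mul_exp eval_chi_exp IHm IHp.
rewrite /chi -parity_seq_parity [pdt_eval (PNode _ _ _) _]/=.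
case: (parity A x); case: (pdt_eval tm x); case: (pdt_eval tp x); by rewrite /sign; field.
Qed.

Lemma size_pdt_expansion n (t : pdt n) : size (pdt_expansion t) <= 4 ^ pdt_depth t.
Proof.
elim: t => [b|A tm IHm tp IHp] //; simpl pdt_expansion; simpl pdt_depth.
rewrite size_map 3!size_cat size_map !size_allpairs /= !mul1n expnS.
set D := maxn _ _.
have : 4 ^ pdt_depth tm <= 4 ^ D by rewrite leq_exp2l ?leq_maxl.
have : 4 ^ pdt_depth tp <= 4 ^ D by rewrite leq_exp2l ?leq_maxr.
lia.
Qed.

Definition maj_exp (E0 E1 E2 : expansion) : expansion :=
  scale_exp (1/2) (E0 ++ E1 ++ E2 ++ scale_exp (-1) (mul_exp (mul_exp E0 E1) E2)).

Lemma eval_maj_exp E0 E1 E2 y :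
  eval_exp (maj_exp E0 E1 E2) y =
  (1/2 * (eval_exp E0 y + eval_exp E1 y + eval_exp E2 y
          - eval_exp E0 y * eval_exp E1 y * eval_exp E2 y))%R.
Proof. by rewrite eval_scale_exp !eval_exp_cat eval_scale_exp !eval_mul_exp; ring. Qed.

Lemma sign_maj3 a b c :
  sign (maj3 a b c) = (1/2 * (sign a + sign b + sign c - sign a * sign b * sign c))%R.
Proof. by case: a; case: b; case: c; rewrite /sign /=; field. Qed.

Fixpoint majk_exp (k m : nat) : expansion :=
  if k is k'.+1 then
    maj_exp (majk_exp k' m) (majk_exp k' (m + 3 ^ k')) (majk_exp k' (m + 2 * 3 ^ k'))
  else chi_exp [:: m].

Lemma majk_ext k y y' : y =1 y' -> majk k y = majk k y'.
Proof.
elim: k y y' => [|k IH] y y' yy' /=; first exact: yy'.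
by congr maj3; apply: IH => i; apply: yy'.
Qed.

Lemma eval_majk_exp k m y : eval_exp (majk_exp k m) y = sign (majk k (fun i => y (i + m))).
Proof.
elim: k m => [|k IH] m /=; first by rewrite eval_chi_exp /chi /seq_parity big_seq1.
rewrite eval_maj_exp !IH sign_maj3.
have shift c : majk k (fun i => y (i + (m + c))) = majk k (fun i => y (i + c + m)).
  by apply: majk_ext => i; rewrite addnA addnAC.
by rewrite !shift.
Qed.

Definition within (lo hi : nat) (E : expansion) : Prop :=
  forall e, e \in E -> forall i, i \in e.1 -> lo <= i < hi.

Lemma within_widen lo hi lo' hi' E :
  lo' <= lo -> hi <= hi' -> within lo hi E -> within lo' hi' E.
Proof. by move=> h1 h2 wE e he i /(wE e he); lia. Qed.

Lemma within_cat lo hi A B : within lo hi A -> within lo hi B -> within lo hi (A ++ B).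
Proof. by move=> wA wB e; rewrite mem_cat => /orP [/wA|/wB]. Qed.

Lemma within_scale lo hi c A : within lo hi A -> within lo hi (scale_exp c A).
Proof. by move=> wA e /mapP [e' he' ->]; apply: (wA e' he'). Qed.

Lemma within_mul lo hi A B : within lo hi A -> within lo hi B -> within lo hi (mul_exp A B).
Proof.
move=> wA wB e /allpairsP [[a b] [ha hb ->]] i /=.
by rewrite mem_cat => /orP [/(wA a ha)|/(wB b hb)].
Qed.

Lemma within_maj_exp lo hi E0 E1 E2 :
  within lo hi E0 -> within lo hi E1 -> within lo hi E2 -> within lo hi (maj_exp E0 E1 E2).
Proof.
move=> w0 w1 w2; apply/within_scale/within_cat/within_cat/within_cat => //.
by apply/within_scale/within_mul/w2/within_mul.
Qed.

Lemma within_majk_exp k m : within m (m + 3 ^ k) (majk_exp k m).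
Proof.
elim: k m => [|k IH] m.
  by move=> e; rewrite inE => /eqP -> i; rewrite inE => /eqP ->; lia.
rewrite expnS; apply: within_maj_exp; apply: within_widen (IH _); lia.
Qed.

Section Blocks.
Variable n : nat.
Implicit Types (U V W P Q : {set 'I_n}) (E : expansion).

Definition block (lo hi : nat) : {set 'I_n} := [set i : 'I_n | lo <= val i < hi].

Lemma block_widen lo hi lo' hi' : lo' <= lo -> hi <= hi' -> block lo hi \subset block lo' hi'.
Proof. by move=> h1 h2; apply/subsetP => i; rewrite !inE; lia. Qed.

Lemma subset_blocks_eq0 a b c d V :
  V \subset block a b -> V \subset block c d -> (b <= c) || (d <= a) -> V = set0.
Proof.
move=> /subsetP Vab /subsetP Vcd h; apply/setP => i; rewrite inE.
by apply/negP => iV; move: (Vab i iV) (Vcd i iV); rewrite !inE; lia.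
Qed.

Section Split.
Variables (l1 h1 l2 h2 : nat) (P Q : {set 'I_n}).
Hypotheses (Pb : P \subset block l1 h1) (Qb : Q \subset block l2 h2) (h12 : h1 <= l2).

Lemma setUI_blockl : (P :|: Q) :&: block l1 h1 = P.
Proof.
rewrite setIUl (setIidPl Pb) -[RHS]setU0; congr (_ :|: _).
apply: (subset_blocks_eq0 (subset_trans (subsetIl _ _) Qb) (subsetIr _ _)).
by rewrite h12 orbT.
Qed.

Lemma setUI_blockr : (P :|: Q) :&: block l2 h2 = Q.
Proof.
rewrite setIUl (setIidPl Qb) -[RHS]set0U; congr (_ :|: _).
apply: (subset_blocks_eq0 (subset_trans (subsetIl _ _) Pb) (subsetIr _ _)).
by rewrite h12.
Qed.

End Split.

Lemma eq_setU_blocks l1 h1 l2 h2 P Q V W :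
  P \subset block l1 h1 -> V \subset block l1 h1 ->
  Q \subset block l2 h2 -> W \subset block l2 h2 -> h1 <= l2 ->
  (P :|: Q == V :|: W) = (P == V) && (Q == W).
Proof.
move=> Pb Vb Qb Wb h12; apply/eqP/andP => [E|[/eqP-> /eqP->] //]; split; apply/eqP.
  by rewrite -(setUI_blockl Pb Qb h12) E (setUI_blockl Vb Wb h12).
by rewrite -(setUI_blockr Pb Qb h12) E (setUI_blockr Vb Wb h12).
Qed.

Lemma odd_support_block lo hi s :
  (forall i, i \in s -> lo <= i < hi) -> odd_support n s \subset block lo hi.
Proof.
move=> sb; apply/subsetP => i; rewrite !inE; apply: contraTT => i_out.
suff /count_memPn -> : val i \notin s by [].
by apply: contra i_out => /sb.
Qed.

Lemma odd_support_cat lo1 hi1 lo2 hi2 s t :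
  (forall i, i \in s -> lo1 <= i < hi1) -> (forall i, i \in t -> lo2 <= i < hi2) ->
  hi1 <= lo2 -> odd_support n (s ++ t) = odd_support n s :|: odd_support n t.
Proof.
move=> sb tb h; apply/setP => i; rewrite !inE count_cat oddD.
case i_s: (val i \in s).
  suff /count_memPn -> : val i \notin t by rewrite addbF orbF.
  by apply/negP => /tb; move: (sb _ i_s); lia.
by move/negbT/count_memPn: i_s ->.
Qed.

Lemma coef_cat A B U : coef (A ++ B) U = (coef A U + coef B U)%R.
Proof. by rewrite /coef big_cat. Qed.

Lemma coef_scale c A U : coef (scale_exp c A) U = (c * coef A U)%R.
Proof. by rewrite /coef big_map mulr_sumr; apply: eq_bigr => e _; rewrite mulrA. Qed.

Lemma coef_maj_exp E0 E1 E2 U :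
  coef (maj_exp E0 E1 E2) U =
  (1/2 * (coef E0 U + coef E1 U + coef E2 U - coef (mul_exp (mul_exp E0 E1) E2) U))%R.
Proof. by rewrite coef_scale !coef_cat coef_scale mulN1r !addrA. Qed.

Lemma coef_mul_exp l1 h1 l2 h2 A B V W :
  within l1 h1 A -> within l2 h2 B -> h1 <= l2 ->
  V \subset block l1 h1 -> W \subset block l2 h2 ->
  coef (mul_exp A B) (V :|: W) = (coef A V * coef B W)%R.
Proof.
move=> wA wB h12 Vb Wb.
rewrite /coef big_allpairs_dep mulr_suml; apply: eq_big_seq => a ha.
rewrite mulr_sumr; apply: eq_big_seq => b hb /=.
rewrite (odd_support_cat (wA a ha) (wB b hb) h12).
rewrite (eq_setU_blocks (odd_support_block (wA a ha)) Vb
  (odd_support_block (wB b hb)) Wb h12).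
by rewrite -mulnb natrM mulrACA.
Qed.

Lemma coef_eq0_out lo hi E U :
  within lo hi E -> ~~ (U \subset block lo hi) -> coef E U = 0%R.
Proof.
move=> wE U_out; rewrite /coef big1_seq // => e /andP [_ he].
case: eqP => [eU|]; last by rewrite mulr0.
by case/negP: U_out; rewrite -eU odd_support_block //; apply: wE.
Qed.

Lemma spectrum_block lo hi E U :
  within lo hi E -> U \in spectrum n E -> U \subset block lo hi.
Proof. by move=> wE; rewrite inE; apply: contraR => /(coef_eq0_out wE) ->. Qed.

Lemma spectrum_neq0 E U :
  coef E (set0 : {set 'I_n}) = 0%R -> U \in spectrum n E -> U != set0.
Proof. by move=> E0; rewrite inE; apply: contraNneq => ->; rewrite E0. Qed.

Lemma coef_eq0_disjoint lo hi p q E U V :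
  within lo hi E -> V \subset U -> V \subset block p q -> (hi <= p) || (q <= lo) ->
  V != set0 -> coef E U = 0%R.
Proof.
move=> wE VU Vb disj V0.
have [Ub|/(coef_eq0_out wE)//] := boolP (U \subset block lo hi).
by case/eqP: V0; apply: subset_blocks_eq0 (subset_trans VU Ub) Vb disj.
Qed.

End Blocks.

Section MajSpectrum.
Variables (n a b c d : nat) (E0 E1 E2 : expansion).
Hypotheses (hab : a <= b) (hbc : b <= c).
Hypotheses (w0 : within a b E0) (w1 : within b c E1) (w2 : within c d E2).
Hypotheses (z0 : coef E0 (set0 : {set 'I_n}) = 0%R)
  (z1 : coef E1 (set0 : {set 'I_n}) = 0%R) (z2 : coef E2 (set0 : {set 'I_n}) = 0%R).

Local Notation E012 := (mul_exp (mul_exp E0 E1) E2).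
Local Notation M := (maj_exp E0 E1 E2).

Lemma coef_mul3 (V0 V1 V2 : {set 'I_n}) :
  V0 \subset block n a b -> V1 \subset block n b c -> V2 \subset block n c d ->
  coef E012 (V0 :|: V1 :|: V2) = (coef E0 V0 * coef E1 V1 * coef E2 V2)%R.
Proof.
move=> V0b V1b V2b.
have w01 : within a c (mul_exp E0 E1).
  by apply: within_mul; [apply: within_widen w0 | apply: within_widen w1].
rewrite (coef_mul_exp w01 w2 (leqnn c) _ V2b); last first.
  by rewrite subUset (subset_trans V0b) ?(subset_trans V1b) ?block_widen.
by rewrite (coef_mul_exp w0 w1 (leqnn b) V0b V1b).
Qed.

Lemma coef_maj_exp_set0 : coef M (set0 : {set 'I_n}) = 0%R.
Proof.
rewrite coef_maj_exp -{4}[set0]setU0 -[set0 :|: set0]setU0 coef_mul3 ?sub0set //.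
by rewrite z0 z1 z2 !mulr0.
Qed.

Lemma spectrum_maj_expl (U : {set 'I_n}) : U \in spectrum n E0 -> U \in spectrum n M.
Proof.
move=> U0; have Ub := spectrum_block w0 U0; have Un0 := spectrum_neq0 z0 U0.
rewrite inE coef_maj_exp (coef_eq0_disjoint w1 (subxx U) Ub) ?leqnn ?orbT //.
rewrite (coef_eq0_disjoint w2 (subxx U) Ub) ?hbc ?orbT //.
rewrite -[U]setU0 -[U :|: set0]setU0 coef_mul3 ?sub0set // !setU0 z1.
rewrite mulr0 mul0r subr0 !addr0 mulf_neq0 //; by rewrite inE in U0.
Qed.

Lemma spectrum_maj_exp_mul (V0 V1 V2 : {set 'I_n}) :
  V0 \in spectrum n E0 -> V1 \in spectrum n E1 -> V2 \in spectrum n E2 ->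
  V0 :|: V1 :|: V2 \in spectrum n M.
Proof.
move=> V0s V1s V2s; move: (V0s) (V1s) (V2s); rewrite !inE => c0 c1 c2.
have V0b := spectrum_block w0 V0s; have V1b := spectrum_block w1 V1s.
have V2b := spectrum_block w2 V2s.
have V0n := spectrum_neq0 z0 V0s; have V1n := spectrum_neq0 z1 V1s.
have V0U : V0 \subset V0 :|: V1 :|: V2 by rewrite -setUA subsetUl.
have V1U : V1 \subset V0 :|: V1 :|: V2 by rewrite -setUA setUCA subsetUl.
rewrite coef_maj_exp (coef_eq0_disjoint w0 V1U V1b) ?leqnn //.
rewrite (coef_eq0_disjoint w1 V0U V0b) ?leqnn ?orbT //.
rewrite (coef_eq0_disjoint w2 V0U V0b) ?hbc ?orbT //.
by rewrite coef_mul3 // !add0r mulf_neq0 // oppr_eq0 !mulf_neq0.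
Qed.

Lemma card_spectrum_maj_exp :
  #|spectrum n E0| * #|spectrum n E1| * #|spectrum n E2| + #|spectrum n E0|
  <= #|spectrum n M|.
Proof.
set S := setX (setX (spectrum n E0) (spectrum n E1)) (spectrum n E2).
pose f (t : {set 'I_n} * {set 'I_n} * {set 'I_n}) := t.1.1 :|: t.1.2 :|: t.2.
have f_inj : {in S &, injective f}.
  move=> [[V0 V1] V2] [[W0 W1] W2]; rewrite !in_setX /=.
  move=> /andP [/andP [V0s V1s] V2s] /andP [/andP [W0s W1s] W2s] /eqP.
  have blk01 X0 X1 : X0 \in spectrum n E0 -> X1 \in spectrum n E1 ->
      X0 :|: X1 \subset block n a c.
    move=> /(spectrum_block w0) X0b /(spectrum_block w1) X1b.
    by rewrite subUset (subset_trans X0b) ?(subset_trans X1b) ?block_widen.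
  rewrite /f (eq_setU_blocks (blk01 _ _ V0s V1s) (blk01 _ _ W0s W1s)
    (spectrum_block w2 V2s) (spectrum_block w2 W2s) (leqnn c)).
  rewrite (eq_setU_blocks (spectrum_block w0 V0s) (spectrum_block w0 W0s)
    (spectrum_block w1 V1s) (spectrum_block w1 W1s) (leqnn b)).
  by case/andP => /andP [/eqP-> /eqP->] /eqP->.
have disj : spectrum n E0 :&: f @: S = set0.
  apply/setP => U; rewrite inE in_set0; apply/andP => -[U0 /imsetP [[[V0 V1] V2]]].
  rewrite !in_setX /= => /andP [/andP [_ V1s] _] UE.
  have V1U : V1 \subset U by rewrite UE /f -setUA setUCA subsetUl.
  case/negP: (spectrum_neq0 z1 V1s); apply/eqP.
  apply: subset_blocks_eq0 (subset_trans V1U (spectrum_block w0 U0)) _ _.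
    exact: spectrum_block w1 V1s.
  by rewrite leqnn.
have sub : spectrum n E0 :|: f @: S \subset spectrum n M.
  rewrite subUset; apply/andP; split; apply/subsetP => U.
    exact: spectrum_maj_expl.
  case/imsetP => [[[V0 V1] V2]]; rewrite !in_setX /=.
  by move=> /andP [/andP [V0s V1s] V2s] ->; apply: spectrum_maj_exp_mul.
apply: leq_trans (subset_leq_card sub).
by rewrite cardsU disj cards0 subn0 card_in_imset // !cardsX addnC.
Qed.

End MajSpectrum.

Fixpoint maj_spectrum_lb (k : nat) : nat :=
  if k is k'.+1 then maj_spectrum_lb k' ^ 3 + maj_spectrum_lb k' else 1.

Lemma expn2_le_maj_spectrum_lb k : 2 ^ 3 ^ k <= maj_spectrum_lb k.+1.
Proof.
elim: k => [|k IH] //=; rewrite expnSr expnM.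
by apply: leq_trans (leq_addr _ _); rewrite leq_exp2r.
Qed.

Lemma spectrum_majk_exp n k m : m + 3 ^ k <= n ->
  coef (majk_exp k m) (set0 : {set 'I_n}) = 0%R /\
  maj_spectrum_lb k <= #|spectrum n (majk_exp k m)|.
Proof.
elim: k m => [|k IH] m mk.
  have mn : m < n by rewrite expn0 addn1 in mk.
  have coefm (U : {set 'I_n}) :
      coef (chi_exp [:: m]) U = (odd_support n [:: m] == U)%:R%R.
    by rewrite /coef big_seq1 mul1r.
  have m_odd : Ordinal mn \in odd_support n [:: m] by rewrite inE /= eqxx.
  split; first by rewrite coefm; case: eqP m_odd => // ->; rewrite inE.
  by apply/card_gt0P; exists (odd_support n [:: m]); rewrite inE coefm eqxx oner_neq0.
rewrite expnS in mk.
have [z0 s0] := IH m ltac:(lia).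
have [z1 s1] := IH (m + 3 ^ k) ltac:(lia).
have [z2 s2] := IH (m + 2 * 3 ^ k) ltac:(lia).
have w0 := @within_majk_exp k m.
have w1 : within (m + 3 ^ k) (m + 2 * 3 ^ k) (majk_exp k (m + 3 ^ k)).
  by apply: within_widen (@within_majk_exp k _); lia.
have w2 := @within_majk_exp k (m + 2 * 3 ^ k).
have hab : m <= m + 3 ^ k by rewrite leq_addr.
have hbc : m + 3 ^ k <= m + 2 * 3 ^ k by lia.
split; first exact: coef_maj_exp_set0 hab hbc w0 w1 w2 z0 z1 z2.
apply: leq_trans (card_spectrum_maj_exp hab hbc w0 w1 w2 z0 z1).
by rewrite leq_add // !expnS expn0 muln1 mulnA !leq_mul.
Qed.

Lemma maj_spectrum_lb_le_depth k (t : pdt (3 ^ k)) :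
  pdt_computes t (@MAJ3k k) -> maj_spectrum_lb k <= 4 ^ pdt_depth t.
Proof.
move=> t_maj.
have same_eval (x : {ffun 'I_(3 ^ k) -> bool}) :
    eval_exp (pdt_expansion t) (ext x) = eval_exp (majk_exp k 0) (ext x).
  rewrite eval_pdt_expansion eval_majk_exp t_maj; congr sign.
  by apply: majk_ext => i; rewrite addn0.
have [_ lb] := @spectrum_majk_exp (3 ^ k) k 0 (leqnn _).
apply: leq_trans lb _.
have -> : spectrum (3 ^ k) (majk_exp k 0) = spectrum (3 ^ k) (pdt_expansion t).
  by apply/setP => U; rewrite !inE (coef_eq_of_eval same_eval).
exact: leq_trans (card_spectrum _ _) (size_pdt_expansion t).
Qed.

Local Open Scope ring_scope.

Theorem theorem2 :
  exists c : rat, 0 < c /\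
    forall (k : nat), (1 <= k)%N ->
      forall t : pdt (3 ^ k), pdt_computes t (@MAJ3k k) ->
        c * (9%:R / 4%:R) ^+ k <= (pdt_depth t)%:R.
Proof.
exists (1/6); split => // [[|k]] // _ t t_maj.
set d := pdt_depth t.
have three_k : (3 ^ k <= 2 * d)%N.
  rewrite -(@leq_exp2l 2) // expnM.
  exact: leq_trans (expn2_le_maj_spectrum_lb k) (maj_spectrum_lb_le_depth t_maj).
have : (9%:R / 4%:R) ^+ k.+1 <= (6 * d)%:R :> rat.
  apply: le_trans (_ : (3 ^ k.+1)%:R <= _); last by rewrite ler_nat expnS; lia.
  by rewrite natrX lerXn2r.
by rewrite natrM -ler_pdivrMl // => /le_trans; apply; rewrite mulrC.
Qed.
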